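(* Let $\Gamma$ be an open graph with a fixed linear ordering of its terminal edges and weights $\mathbf A=(A_e)$, and let $S_\Gamma(\mathbf A,\boldsymbol\xi)$ be its generating partition function. Let $i$ and $j$ be terminal edges with $j$ immediately following $i$ in the ordering, with weights $A_i,A_j$, and let $\Gamma'$ be the graph obtained by identifying the terminal vertices of $i$ and $j$ and erasing the resulting two-valent vertex, so that $i,j$ become a single edge $e$ with weight $A_e=A_iA_j$. Let $\mathbf A'$ be the resulting weights and $\boldsymbol\xi'$ be $\boldsymbol\xi$ with $\xi_i,\xi_j$ removed. Then $$S_{\Gamma'}(\mathbf A',\boldsymbol\xi')=\int S_\Gamma(\mathbf A,\boldsymbol\xi)\,e^{\xi_i\xi_j}\,d\xi_j\,d\xi_i .$$
   Context: An open graph is a graph with some terminal edges, each having a univalent terminal vertex; other vertices are internal. A dimer configuration on an open graph is a set of edges containing every internal vertex exactly once (no condition on terminal vertices). For a subset $T$ of the set $\mathcal T_\Gamma$ of terminal edges, $S_\Gamma(\mathbf A,T)=\sum_D\prod_{e\in D}A_e$, summed over dimer configurations $D$ in which exactly the terminal edges of $T$ are occupied. With odd (Grassmann) variables $\xi_t$, $t\in\mathcal T_\Gamma$, the generating partition function is $S_\Gamma(\mathbf A,\boldsymbol\xi)=\sum_{T\subset\mathcal T_\Gamma}S_\Gamma(\mathbf A,T)\prod_{t\in T}\xi_t$, products taken in the fixed order. Berezin integration with $\int\xi_i\xi_j\,d\xi_j\,d\xi_i=1$. *)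

From HB Require Import structures.
From mathcomp Require Import all_boot all_order all_algebra.
Set Implicit Arguments. Unset Strict Implicit. Unset Printing Implicit Defensive.
Import Order.TTheory GRing.Theory.
Local Open Scope ring_scope.

(*  Open graphs.  Vertices live in a finite type V, edges in a finite  *)
(*  type E.  An open graph selects an edge set, an endpoint map (so    *)
(*  multi-edges and loops are representable), a set of internal and a  *)
(*  set of terminal vertices.                                          *)
Record open_graph (V E : finType) := OpenGraph {
  og_edges : {set E};
  og_ends : E -> V * V;
  og_internal : {set V};
  og_terminal : {set V}
}.

Section Graphs.
Variables (V E : finType).
Implicit Types (G : open_graph V E) (D : {set E}) (v : V) (e : E).

(* number of half-edges of edges of D at v (a loop counts twice) *)
Definition incid G D v : nat :=
  (\sum_(e in D) (((og_ends G e).1 == v) + ((og_ends G e).2 == v)))%N.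

Definition is_endpoint G e v :=
  ((og_ends G e).1 == v) || ((og_ends G e).2 == v).

Definition other G e v :=
  if (og_ends G e).1 == v then (og_ends G e).2 else (og_ends G e).1.

Definition open_graph_wf G :=
  [/\ [disjoint og_internal G & og_terminal G],
      (forall e, e \in og_edges G ->
         ((og_ends G e).1 \in og_internal G :|: og_terminal G) /\
         ((og_ends G e).2 \in og_internal G :|: og_terminal G))
    & (forall v, v \in og_terminal G -> incid G (og_edges G) v = 1%N)].

Definition tedges G : {set E} :=
  [set e in og_edges G | 
     (((og_ends G e).1 \in og_terminal G) || ((og_ends G e).2 \in og_terminal G))].

(* dimer configuration: a set of edges covering every internal vertex
   exactly once (no condition on terminal vertices) *)
Definition dimer G D :=
  (D \subset og_edges G) && [forall v in og_internal G, incid G D v == 1%N].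

Definition Sdim (R : comPzRingType) G (A : E -> R) (T : {set E}) : R :=
  \sum_(D : {set E} | dimer G D && (D :&: tedges G == T)) \prod_(e in D) A e.

(* Gamma' : glue the terminal vertices ti (of i) and tj (of j) and erase
   the resulting two-valent vertex; i and j become the single edge e,
   which keeps the name i, joining the other endpoints of i and j. *)
Definition glue G (i j : E) (ti tj : V) : open_graph V E :=
  OpenGraph (og_edges G :\ j)
    (fun e => if e == i then (other G i ti, other G j tj) else og_ends G e)
    (og_internal G) (og_terminal G :\ ti :\ tj).

Definition glue_weights (R : comPzRingType) (A : E -> R) (i j : E) : E -> R :=
  fun e => if e == i then A i * A j else A e.

End Graphs.

(*  Grassmann algebra over R with odd generators xi_t, t : E, ordered  *)
(*  by their position in a sequence ts.  An element is its coefficient *)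
(*  function on the monomial basis xi_U (U : {set E}), each monomial   *)
(*  taken as the product of its generators in increasing order.        *)
Section Grassmann.
Variables (R : comPzRingType) (E : finType).
Definition grass := {ffun {set E} -> R}.

Definition gbasis (U : {set E}) : grass := [ffun W => (W == U)%:R].
Definition gone : grass := gbasis set0.
Definition gen (t : E) : grass := gbasis [set t].
Definition gadd (f g : grass) : grass := [ffun U => f U + g U].
Definition gscale (c : R) (f : grass) : grass := [ffun U => c * f U].
Definition gzero : grass := [ffun _ => 0].
Definition gsum (I : finType) (P : pred I) (F : I -> grass) : grass :=
  [ffun U => \sum_(x | P x) F x U].

Variable ts : seq E.
Definition rk (t : E) : nat := index t ts.

(* number of transpositions needed to reorder xi_S xi_T *)
Definition ninv (S T : {set E}) : nat :=
  #|[set p : E * E | [&& p.1 \in S, p.2 \in T & (rk p.2 < rk p.1)%N]]|.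

Definition gmul (f g : grass) : grass :=
  [ffun U => \sum_(S : {set E}) \sum_(T : {set E})
     (if [disjoint S & T] && (S :|: T == U)
      then (-1) ^+ ninv S T * f S * g T else 0)].

Definition gprod (T : {set E}) : grass :=
  foldr gmul gone [seq gen t | t <- [seq t <- ts | t \in T]].

(* Berezin integration  f |-> \int f d xi_k , normalised so that
   \int g xi_k d xi_k = g for g free of xi_k (the iterated integral
   \int f d xi_j d xi_i is berezin i (berezin j f), and then
   \int xi_i xi_j d xi_j d xi_i = 1 when i precedes j). *)
Definition berezin (k : E) (f : grass) : grass :=
  [ffun U : {set E} => if k \in U then 0
             else (-1) ^+ #|[set u in U | (rk k < rk u)%N]| * f (k |: U)].
End Grassmann.

Definition genpf (R : comPzRingType) (V E : finType) (G : open_graph V E)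
    (A : E -> R) (ts : seq E) : grass R E :=
  gsum (fun T : {set E} => T \subset tedges G)
       (fun T => gscale (Sdim G A T) (gprod R ts T)).

From mathcomp Require Import all_boot all_order all_algebra zify.
Set Implicit Arguments. Unset Strict Implicit. Unset Printing Implicit Defensive.
Import Order.TTheory GRing.Theory.
Local Open Scope ring_scope.

(* Both sides are compared coefficient by coefficient on the monomial basis
   xi_U of the Grassmann algebra.
   - Grassmann side: the ordered product xi_T is the basis monomial of T, so
     the coefficient of xi_U in S_Gamma(A, xi) is S_Gamma(A, U) (genpfE).
     Since xi_j immediately follows xi_i, e^{xi_i xi_j} = 1 + xi_i xi_j is the
     monomial xi_{i,j} and every sign cancels: for U free of i, j the
     integral has coefficient f(U + {i,j}) + f(U) (berezin_exp_adjacent),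
     and it has no component on monomials containing xi_i or xi_j.
   - Graph side: a dimer cover of Gamma' either avoids the merged edge (and
     is then a cover of Gamma with the same occupied terminal edges), or uses
     it (and then D |-> D + {j} gives a cover of Gamma occupying i and j,
     with the same weight since A_e = A_i A_j).  Hence
     S_Gamma'(A', U) = S_Gamma(A, U) + S_Gamma(A, U + {i,j}) (Sdim_glue). *)

Lemma sum_delta (R : comPzRingType) (E : finType) (F : {set E} -> R) (a : {set E}) :
  \sum_(T : {set E}) (if T == a then F T else 0) = F a.
Proof. by rewrite -big_mkcond big_pred1_eq. Qed.

Lemma set_eqF (E : finType) (A B : {set E}) x :
  (x \in A) != (x \in B) -> (A == B) = false.
Proof. by apply: contraNF => /eqP ->; rewrite eqxx. Qed.

Lemma sorted_index (T : eqType) (s : seq T) :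
  uniq s -> sorted (relpre (index^~ s) ltn) s.
Proof.
move=> us; rewrite -sorted_map.
suff -> : [seq index t s | t <- s] = iota 0 (size s) by exact: iota_ltn_sorted.
elim: s us => //= x s IH /andP[xs us]; rewrite eqxx; congr cons.
rewrite -(addn0 1%N) iotaDl -IH // -map_comp; apply/eq_in_map => t ts /=.
by have /negbTE -> : x != t by apply: contraNneq xs => ->.
Qed.

Section GrassmannProducts.
Variables (R : comPzRingType) (E : finType) (ts : seq E).
Implicit Types (f g : grass R E) (S T U W : {set E}).

Lemma gmul_basis_r f T0 U :
  gmul ts f (gbasis R T0) U =
  \sum_(S : {set E}) (if [disjoint S & T0] && (S :|: T0 == U)
          then (-1) ^+ ninv ts S T0 * f S else 0).
Proof.
rewrite ffunE; apply: eq_bigr => S _.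
rewrite (bigD1 T0) //= big1 ?addr0 => [|T /negbTE HT]; last first.
  by rewrite ffunE HT mulr0; case: ifP.
by rewrite ffunE eqxx mulr1.
Qed.

Lemma gmul_basis S0 T0 U :
  gmul ts (gbasis R S0) (gbasis R T0) U =
  if [disjoint S0 & T0] && (S0 :|: T0 == U) then (-1) ^+ ninv ts S0 T0 else 0.
Proof.
rewrite gmul_basis_r (bigD1 S0) //= big1 ?addr0 => [|S /negbTE HS]; last first.
  by rewrite ffunE HS mulr0; case: ifP.
by rewrite ffunE eqxx mulr1.
Qed.

Lemma gmul_addr f g1 g2 U :
  gmul ts f (gadd g1 g2) U = gmul ts f g1 U + gmul ts f g2 U.
Proof.
rewrite !ffunE -big_split /=; apply: eq_bigr => S _.
rewrite -big_split /=; apply: eq_bigr => T _; rewrite ffunE.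
by case: ifP => _; rewrite ?mulrDr ?addr0.
Qed.

Lemma gmul1r f : gmul ts f (gone R E) = f.
Proof.
apply/ffunP => U; rewrite /gone gmul_basis_r -[RHS](sum_delta (fun S => f S)).
apply: eq_bigr => S _; rewrite setU0 -setI_eq0 setI0 eqxx /=.
have -> : ninv ts S set0 = 0%N.
  by apply/eqP; rewrite cards_eq0; apply/eqP/setP => -[a b]; rewrite !inE andbF.
by rewrite mul1r.
Qed.

Lemma gmul_gen_basis t W :
  t \notin W -> (forall w, w \in W -> (rk ts t < rk ts w)%N) ->
  gmul ts (gen R t) (gbasis R W) = gbasis R (t |: W).
Proof.
move=> tW Hw; apply/ffunP => U; rewrite gmul_basis [RHS]ffunE.
have -> : ninv ts [set t] W = 0%N.
  apply/eqP; rewrite cards_eq0; apply/eqP/setP => -[a b]; rewrite !inE /=.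
  case: eqP => [-> | _] //=; case bW: (b \in W) => //=.
  by rewrite ltnNge ltnW // Hw.
by rewrite disjoints1 tW /= eq_sym; case: eqP.
Qed.

Lemma gprod_sorted (l : seq E) :
  sorted (relpre (rk ts) ltn) l ->
  foldr (gmul ts) (gone R E) [seq gen R t | t <- l] = gbasis R [set x in l].
Proof.
elim: l => [_ | t l IH Hp] /=.
  by rewrite /gone; congr gbasis; apply/setP => x; rewrite !inE.
have /allP Hall :=
  order_path_min (fun y x z => @ltn_trans (rk ts y) (rk ts x) (rk ts z)) Hp.
rewrite IH ?(path_sorted Hp) //.
have -> : [set x in t :: l] = t |: [set x in l] by apply/setP => x; rewrite !inE.
apply: gmul_gen_basis => [|w]; rewrite inE; last exact: Hall.
by apply/negP => /Hall; rewrite /= ltnn.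
Qed.

Lemma gprod_basis T :
  uniq ts -> T \subset [set t in ts] -> gprod R ts T = gbasis R T.
Proof.
move=> uts sT; rewrite /gprod gprod_sorted.
  congr gbasis; apply/setP => x; rewrite !inE mem_filter.
  by case xT: (x \in T) => //=; move/subsetP: sT => /(_ x xT); rewrite inE.
by apply: sorted_filter (sorted_index uts) => y x z; apply: ltn_trans.
Qed.

Lemma berezin_in k f U : k \in U -> berezin ts k f U = 0.
Proof. by rewrite ffunE => ->. Qed.

End GrassmannProducts.

Lemma genpfE (R : comPzRingType) (V E : finType) (G : open_graph V E)
    (A : E -> R) (ts : seq E) U :
  uniq ts -> [set t in ts] = tedges G ->
  genpf G A ts U = if U \subset tedges G then Sdim G A U else 0.
Proof.
move=> uts hts; rewrite /genpf ffunE.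
rewrite (eq_bigr (fun T => if T == U then Sdim G A T else 0)) => [|T sT]; last first.
  rewrite ffunE gprod_basis ?hts // ffunE eq_sym.
  by case: (T =P U) => [->|_]; rewrite ?mulr1 ?mulr0.
rewrite -big_mkcondr /=.
case sU: (U \subset tedges G).
  by rewrite (big_pred1 U) // => T /=; rewrite andbC; case: (T =P U) => [->|].
by rewrite big1 // => T /andP[sT /eqP eTU]; move: sT; rewrite eTU sU.
Qed.

Lemma drop_adjacent (E : finType) (s1 s2 : seq E) (i j : E) :
  uniq (s1 ++ i :: j :: s2) ->
  uniq (s1 ++ s2) /\ [set t in s1 ++ s2] = [set t in s1 ++ i :: j :: s2] :\ i :\ j.
Proof.
rewrite -[i :: j :: s2]/([:: i; j] ++ s2) => uts.
have {uts} : uniq ([:: i; j] ++ s1 ++ s2) by rewrite uniq_catCA.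
rewrite cat_uniq has_sym /= !negb_or => /and3P[_ /and3P[is12 js12 _] ->]; split=> //.
apply/setP => x; rewrite !in_setD1 !in_set.
have [->|xj] := eqVneq x j; first by rewrite (negbTE js12).
have [->|xi] := eqVneq x i; first by rewrite (negbTE is12).
by rewrite !mem_cat !in_cons (negbTE xi) (negbTE xj).
Qed.

Section AdjacentGenerators.
Variables (R : comPzRingType) (E : finType) (ts s1 s2 : seq E) (i j : E).
Hypotheses (uniq_ts : uniq ts) (ts_ij : ts = s1 ++ i :: j :: s2).
Implicit Types (f : grass R E) (U : {set E}).

Lemma adjacent_layout : [/\ i \notin s1, j \notin s1 & i != j].
Proof.
move: uniq_ts; rewrite ts_ij cat_uniq /= => /and5P[_ H1 H2 _ _].
move: H1 H2; rewrite in_cons !negb_or => /and3P[is1 js1 _] /andP[ij _].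
by [].
Qed.

Lemma adjacent_neq : i != j.
Proof. by case: adjacent_layout. Qed.

Lemma rk_adjacent : rk ts j = (rk ts i).+1.
Proof.
case: adjacent_layout => is1 js1 ij.
rewrite /rk ts_ij !index_cat (negbTE is1) (negbTE js1) /= eqxx.
by rewrite (negbTE ij) eqxx addn0 addn1.
Qed.

Lemma rk_above_adjacent u : u != j -> (rk ts j < rk ts u)%N = (rk ts i < rk ts u)%N.
Proof.
move=> uj; rewrite rk_adjacent [in RHS]leq_eqVlt.
suff /negbTE -> : (rk ts i).+1 != rk ts u by [].
rewrite -rk_adjacent; apply: contra uj => /eqP rk_u; apply/eqP.
have jts : j \in ts by rewrite ts_ij mem_cat !in_cons eqxx !orbT.
have uts : u \in ts by rewrite -index_mem -/(rk ts u) -rk_u /rk index_mem.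
exact: (index_inj j uts jts (esym rk_u)).
Qed.

Lemma gen_adjacent : gmul ts (gen R i) (gen R j) = gbasis R [set i; j].
Proof.
rewrite /gen gmul_gen_basis => [//||w]; first by rewrite inE adjacent_neq.
by rewrite inE => /eqP ->; rewrite rk_adjacent.
Qed.

(* Iterated Berezin integral: the coefficient of xi_U in
   \int f dxi_j dxi_i is the coefficient of xi_(U u {i,j}) in f; the two
   signs agree because i and j are adjacent. *)
Lemma berezin_adjacent f U : i \notin U -> j \notin U ->
  berezin ts i (berezin ts j f) U = f (j |: (i |: U)).
Proof.
move=> iU jU.
rewrite ffunE (negbTE iU) ffunE in_setU1 eq_sym (negbTE adjacent_neq) (negbTE jU) /=.
have -> : [set u in i |: U | (rk ts j < rk ts u)%N] =
          [set u in U | (rk ts i < rk ts u)%N].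
  apply/setP => u; rewrite !inE; case: (u =P i) => [->|/eqP ui] /=.
    by rewrite (negbTE iU) rk_adjacent ltnNge leqnSn.
  case uU: (u \in U) => //=; apply: rk_above_adjacent.
  by apply: contraNneq jU => <-.
by rewrite mulrA -exprD addnn -mul2n exprM sqrrN !expr1n mul1r.
Qed.

(* Moving U past xi_i xi_j costs an even number of transpositions. *)
Lemma gmul_adjacent f U : i \notin U -> j \notin U ->
  gmul ts f (gbasis R [set i; j]) (j |: (i |: U)) = f U.
Proof.
move=> iU jU; rewrite gmul_basis_r -[RHS](sum_delta (fun S => f S)).
have parity :
    ninv ts U [set i; j] = (2 * #|[set u in U | (rk ts i < rk ts u)%N]|)%N.
  have -> : 2%N = #|[set i; j]| by rewrite cards2 adjacent_neq.
  rewrite /ninv mulnC -cardsX.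
  apply: eq_card => -[u v]; rewrite !inE /=.
  case: (v =P i) => [->|vi] /=; first by rewrite andbT andbC.
  case: (v =P j) => [->|vj] /=; last by rewrite !andbF.
  rewrite andbT; case uU: (u \in U) => //=; apply: rk_above_adjacent.
  by apply: contraNneq jU => <-.
apply: eq_bigr => S _.
have -> : [disjoint S & [set i; j]] && (S :|: [set i; j] == j |: (i |: U)) = (S == U).
  apply/idP/eqP => [/andP[dis /eqP SU] | ->]; last first.
    apply/andP; split.
      rewrite disjoint_subset; apply/subsetP => x xU; rewrite !inE.
      by apply/norP; split; apply: contraTneq xU => ->.
    apply/eqP/setP => x; rewrite !inE.
    by case: (x \in U); case: (x == i); case: (x == j).
  apply/setP => x; move/setP: SU => /(_ x); rewrite !inE.
  have [xij|] := boolP ((x == i) || (x == j)); last first.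
    by rewrite negb_or => /andP[/negbTE-> /negbTE->]; rewrite !orbF.
  have -> : (x \in U) = false by case/orP: xij => /eqP->; apply/negbTE.
  by move=> _; apply: (disjointFl dis); rewrite !inE.
case: (S =P U) => // ->.
by rewrite parity exprM sqrrN !expr1n mul1r.
Qed.

Lemma berezin_exp_adjacent f U : i \notin U -> j \notin U ->
  berezin ts i (berezin ts j
    (gmul ts f (gadd (gone R E) (gmul ts (gen R i) (gen R j))))) U
  = f (j |: (i |: U)) + f U.
Proof.
move=> iU jU; rewrite berezin_adjacent // gmul_addr gmul1r gen_adjacent.
by rewrite gmul_adjacent.
Qed.

Lemma berezin_adjacent_in f U : (i \in U) || (j \in U) ->
  berezin ts i (berezin ts j f) U = 0.
Proof.
have [iU _|iU /= jU] := boolP (i \in U); first exact: berezin_in.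
by rewrite ffunE (negbTE iU) berezin_in ?mulr0 // in_setU1 jU orbT.
Qed.

End AdjacentGenerators.

Section OpenGraphFacts.
Variables (V E : finType) (G : open_graph V E).
Hypothesis wf : open_graph_wf G.

Lemma internal_not_terminal v : v \in og_internal G -> v \notin og_terminal G.
Proof. by case: wf => dis _ _ vI; rewrite (disjointFr dis vI). Qed.

(* A terminal vertex, being univalent, is an endpoint of at most one edge. *)
Lemma terminal_edge_uniq v e e' :
  v \in og_terminal G -> e \in og_edges G -> e' \in og_edges G ->
  is_endpoint G e v -> is_endpoint G e' v -> e = e'.
Proof.
case: wf => _ _ /(_ v) univalent vT eE e'E He He'.
apply/eqP; apply: contraT => ee'; have := univalent vT; rewrite /incid.
rewrite (bigD1 e) //= (bigD1 e') /=; last by rewrite e'E eq_sym ee'.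
have pos b1 b2 : b1 || b2 -> (0 < b1 + b2)%N by case: b1; case: b2.
by have := pos _ _ He; have := pos _ _ He'; lia.
Qed.

Lemma off_terminal_edge i ti e :
  ti \in og_terminal G -> is_endpoint G i ti ->
  i \in og_edges G -> e \in og_edges G -> e != i ->
  ((og_ends G e).1 != ti) && ((og_ends G e).2 != ti).
Proof.
move=> tiT Hi iE eE; rewrite -negb_or; apply: contra => He.
by rewrite (terminal_edge_uniq tiT eE iE He Hi).
Qed.

End OpenGraphFacts.

Lemma incid_other (V E : finType) (G : open_graph V E) e t v :
  is_endpoint G e t -> t != v ->
  (((og_ends G e).1 == v) + ((og_ends G e).2 == v))%N = (other G e t == v).
Proof.
rewrite /is_endpoint /other => Ht tv.
case: ((og_ends G e).1 =P t) => [-> | h]; first by rewrite (negbTE tv).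
by move: Ht; case: ((og_ends G e).1 =P t) => // _ /= /eqP ->; rewrite (negbTE tv) addn0.
Qed.

Section Gluing.
Variables (V E : finType) (G : open_graph V E) (i j : E) (ti tj : V).
Hypotheses (wf : open_graph_wf G) (ij : i != j)
  (ti_term : ti \in og_terminal G) (i_ti : is_endpoint G i ti)
  (tj_term : tj \in og_terminal G) (j_tj : is_endpoint G j tj)
  (i_tedge : i \in tedges G) (j_tedge : j \in tedges G)
  (oi_int : other G i ti \in og_internal G) (oj_int : other G j tj \in og_internal G).

Let G' := glue G i j ti tj.

Lemma i_edge : i \in og_edges G.
Proof. by move: i_tedge; rewrite inE => /andP[]. Qed.

Lemma j_edge : j \in og_edges G.
Proof. by move: j_tedge; rewrite inE => /andP[]. Qed.

(* The terminal edges of Gamma' are those of Gamma except i and j: the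
   merged edge joins two internal vertices, and the other edges keep
   their endpoints. *)
Lemma tedges_glue : tedges G' = tedges G :\ i :\ j.
Proof.
apply/setP => e; rewrite /tedges /= !inE.
case: (e =P i) => [->|/eqP ei] /=.
  by rewrite (negbTE (internal_not_terminal wf oi_int))
             (negbTE (internal_not_terminal wf oj_int)) !andbF.
case: (e =P j) => [->|/eqP ej] //=; case eE: (e \in og_edges G) => //=.
have /andP[-> ->] := off_terminal_edge wf ti_term i_ti i_edge eE ei.
by have /andP[-> ->] := off_terminal_edge wf tj_term j_tj j_edge eE ej.
Qed.

Lemma incid_glue_free (D : {set E}) v :
  i \notin D -> incid G' D v = incid G D v.
Proof.
move=> iD; apply: eq_bigr => e eD /=.
by rewrite ifN //; apply: contraNneq iD => <-.
Qed.

Lemma incid_glue_merged (D : {set E}) v :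
  i \in D -> j \in D -> v \in og_internal G ->
  incid G' (D :\ j) v = incid G D v.
Proof.
move=> iD jD vI.
have tiv : ti != v by apply: contraNneq (internal_not_terminal wf vI) => <-.
have tjv : tj != v by apply: contraNneq (internal_not_terminal wf vI) => <-.
rewrite /incid (bigD1 i) /=; last by rewrite !inE ij.
rewrite [in RHS](bigD1 j) //= [in RHS](bigD1 i) /=; last by rewrite iD ij.
rewrite eqxx (eq_big (fun e => (e \in D) && (e != j) && (e != i))
    (fun e => ((og_ends G e).1 == v) + ((og_ends G e).2 == v))%N) => [|e|e].
- by rewrite /= -(incid_other i_ti tiv) -(incid_other j_tj tjv) -addnA addnCA.
- by rewrite !inE [(e != j) && _]andbC.
- by move=> /andP[_ /negbTE ->].
Qed.

Lemma dimer_glue_free (D : {set E}) :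
  i \notin D -> j \notin D -> dimer G' D = dimer G D.
Proof.
move=> iD jD; rewrite /dimer /=; congr (_ && _).
  apply/subsetP/subsetP => sD x xD.
    by have := sD x xD; rewrite !inE => /andP[].
  by rewrite !inE sD // andbT; apply: contraNneq jD => <-.
by apply: eq_forallb => v; rewrite incid_glue_free.
Qed.

Lemma dimer_glue_merged (D : {set E}) :
  i \in D -> j \in D -> dimer G' (D :\ j) = dimer G D.
Proof.
move=> iD jD; rewrite /dimer /=; congr (_ && _).
  apply/subsetP/subsetP => sD x; last by rewrite !inE => /andP[-> /sD ->].
  have [-> _|xj xD] := eqVneq x j; first exact: j_edge.
  by have := sD x; rewrite !inE xj xD => /(_ isT).
apply: eq_forallb_in => v vI; congr (_ == _); exact: incid_glue_merged.
Qed.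

Lemma trace_glue_free (D : {set E}) :
  i \notin D -> j \notin D -> D :&: tedges G' = D :&: tedges G.
Proof.
move=> iD jD; apply/setP => x; rewrite tedges_glue !inE.
case: (x =P j) => [->|_]; first by rewrite (negbTE jD).
by case: (x =P i) => [->|_]; first by rewrite (negbTE iD).
Qed.

Lemma trace_glue_merged (D U : {set E}) :
  i \in D -> j \in D -> i \notin U -> j \notin U ->
  ((D :\ j) :&: tedges G' == U) = (D :&: tedges G == j |: (i |: U)).
Proof.
move=> iD jD iU jU; rewrite tedges_glue.
apply/eqP/eqP => /setP HU; apply/setP => x; move: (HU x);
  rewrite !in_setI !in_setD1 !in_setU1.
- case: (x =P j) => [->|_]; first by rewrite jD j_tedge.
  by case: (x =P i) => [->|_]; first by rewrite iD i_tedge.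
- case: (x =P j) => [->|_] /=; first by rewrite (negbTE jU).
  by case: (x =P i) => [->|_]; rewrite ?eqxx /= ?andbF ?(negbTE iU).
Qed.

Lemma weight_glue_merged (R : comPzRingType) (A : E -> R) (D : {set E}) :
  i \in D -> j \in D ->
  \prod_(e in D :\ j) glue_weights A i j e = \prod_(e in D) A e.
Proof.
move=> iD jD; rewrite (bigD1 i) /=; last by rewrite !inE ij.
rewrite [RHS](bigD1 j) //= [in RHS](bigD1 i) /=; last by rewrite iD ij.
rewrite /glue_weights eqxx mulrA (mulrC (A j)); congr (_ * _).
apply: eq_big => [e|e /andP[_ /negbTE ->]] //.
by rewrite !inE [(e != j) && _]andbC.
Qed.

(* Local form of the lemma: each cover of Gamma' either avoids the merged
   edge (a cover of Gamma with the same trace U) or uses it (a cover of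
   Gamma with trace U + {i, j}). *)
Lemma Sdim_glue (R : comPzRingType) (A : E -> R) (U : {set E}) :
  i \notin U -> j \notin U ->
  Sdim G' (glue_weights A i j) U = Sdim G A U + Sdim G A (j |: (i |: U)).
Proof.
move=> iU jU; rewrite /Sdim (bigID (fun D : {set E} => i \in D)) /= addrC.
congr (_ + _).
  apply: eq_big => D; last first.
    by move=> /andP[_ iD]; apply: eq_bigr => e eD; rewrite /glue_weights ifN //;
       apply: contraNneq iD => <-.
  have [iD|iD] := boolP (i \in D).
    by rewrite andbF (@set_eqF _ _ _ i) ?andbF // in_setI iD i_tedge (negbTE iU).
  have [jD|jD] := boolP (j \in D).
    rewrite [D :&: tedges G == U](@set_eqF _ _ _ j) ?andbF; last first.
      by rewrite in_setI jD j_tedge (negbTE jU).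
    by rewrite /dimer /=; case: subsetP => // /(_ j jD); rewrite !inE eqxx.
  by rewrite andbT dimer_glue_free // trace_glue_free.
rewrite (reindex_onto (fun D : {set E} => D :\ j) (fun D => j |: D)) /=; last first.
  move=> D /andP[/andP[/andP[sD _] _] _]; apply: setU1K.
  by apply: contraTN sD => jD; apply/subsetPn; exists j; rewrite // !inE eqxx.
apply: eq_big => D; last first.
  move=> /andP[/andP[_ iDj] /eqP jD]; rewrite weight_glue_merged // -jD ?setU11 //.
  by rewrite -jD in iDj; move: iDj; rewrite in_setD1 => /andP[].
have -> : (j |: (D :\ j) == D) = (j \in D).
  by apply/eqP/idP => [<-|/setD1K //]; rewrite setU11.
have [jD|jD] := boolP (j \in D); last first.
  rewrite andbF [D :&: _ == _](@set_eqF _ _ _ j) ?andbF //.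
  by rewrite in_setI (negbTE jD) setU11.
rewrite andbT in_setD1 ij /=.
have [iD|iD] := boolP (i \in D); last first.
  rewrite andbF [D :&: _ == _](@set_eqF _ _ _ i) ?andbF //.
  by rewrite in_setI (negbTE iD) !in_setU1 eqxx orbT.
by rewrite andbT dimer_glue_merged // trace_glue_merged.
Qed.

End Gluing.

Theorem lemma1 (R : comPzRingType) (V E : finType) (G : open_graph V E)
    (A : E -> R) (ts s1 s2 : seq E) (i j : E) (ti tj : V) :
  open_graph_wf G ->
  uniq ts ->
  [set t in ts] = tedges G ->
  ts = s1 ++ i :: j :: s2 ->
  ti \in og_terminal G -> is_endpoint G i ti ->
  tj \in og_terminal G -> is_endpoint G j tj ->
  other G i ti \in og_internal G -> other G j tj \in og_internal G ->
  genpf (glue G i j ti tj) (glue_weights A i j) (s1 ++ s2) =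
  berezin ts i (berezin ts j
    (gmul ts (genpf G A ts) (gadd (gone R E) (gmul ts (gen R i) (gen R j))))).
Proof.
move=> wf uts hset hts tiT Hi tjT Hj oi oj.
have ij := adjacent_neq uts hts.
have iT : i \in tedges G by rewrite -hset inE hts mem_cat !in_cons eqxx !orbT.
have jT : j \in tedges G by rewrite -hset inE hts mem_cat !in_cons eqxx !orbT.
have T'E : tedges (glue G i j ti tj) = tedges G :\ i :\ j by apply: tedges_glue.
have [uts' hset'] : uniq (s1 ++ s2) /\ [set t in s1 ++ s2] = tedges G :\ i :\ j.
  by rewrite -hset hts; apply: drop_adjacent; rewrite -hts.
apply/ffunP => U; rewrite genpfE ?T'E //.
have [ijU|] := boolP ((i \in U) || (j \in U)).
  by rewrite berezin_adjacent_in // !subsetD1; case/orP: ijU => ->; rewrite ?andbF.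
rewrite negb_or => /andP[iU jU].
rewrite (berezin_exp_adjacent uts hts) // !genpfE // Sdim_glue //.
rewrite !subsetD1 iU jU !andbT !subUset !sub1set iT jT /=.
by case: ifP; rewrite ?addr0 // addrC.
Qed.
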